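(* Let $\mathbb{A}$ be a 2-category having the two-dimensional kernel diagram of a 1-cell $l:b\to e$. Then: (1) provided that the right lifting $\mathrm{Rift}_ll$ of $l$ through $l$ exists and is respected by $\delta_0:b\downarrow^l b\to b$, $l$ is a Kleisli morphism if and only if $l$ is an effective op-faithful morphism; (2) provided that the left lifting $\mathrm{Lift}_ll$ of $l$ through $l$ exists and is respected by $\delta_1:b\downarrow^lb\to b$, $l$ is a co-Kleisli morphism if and only if $l$ is an effective op-faithful morphism.
   Context: A 2-category is a $\mathbf{Cat}$-enriched category; composition of 1-cells is juxtaposition, vertical composition of 2-cells is $\cdot$, horizontal composition is $\ast$, $\mathrm{id}_f$ is the identity 2-cell on $f$. $\mathbb{A}^{\mathrm{op}}$, $\mathbb{A}^{\mathrm{co}}$, $\mathbb{A}^{\mathrm{coop}}$ are obtained by reversing 1-cells, 2-cells, or both. A 1-cell is an equivalence if it has a pseudo-inverse up to invertible 2-cells. For a 1-cell $p:e\to b$ of a 2-category $\mathbb{B}$: an opcomma object of $p$ along itself is $b\uparrow_pb$ with $\delta^0,\delta^1:b\to b\uparrow_pb$, $\alpha:\delta^1p\Rightarrow\delta^0p$ such that for every $y$, $h\mapsto(h\delta^0,h\delta^1,\mathrm{id}_h\ast\alpha)$ is an isomorphism from $\mathbb{B}(b\uparrow_pb,y)$ onto the category of triples $(h_0,h_1:b\to y,\beta:h_1p\Rightarrow h_0p)$ with morphisms pairs $(\xi_0,\xi_1)$ with $(\xi_0\ast\mathrm{id}_p)\cdot\beta=\beta'\cdot(\xi_1\ast\mathrm{id}_p)$.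 A two-dimensional pushout of a span $f_0,f_1$ is $P$ with $q_0,q_1$, $q_0f_0=q_1f_1$, such that $k\mapsto(kq_0,kq_1)$ is an isomorphism from $\mathbb{B}(P,y)$ onto pairs $(k_0,k_1)$ with $k_0f_0=k_1f_1$ (morphisms pairs of 2-cells $(\xi_0,\xi_1)$ with $\xi_0\ast\mathrm{id}_{f_0}=\xi_1\ast\mathrm{id}_{f_1}$). $\mathbb{B}$ has the two-dimensional cokernel diagram of $p$ if it has $b\uparrow_pb$ and a two-dimensional pushout $b\uparrow_pb\uparrow_pb$ of $(\delta^0,\delta^1)$ with $D^0,D^2$, $D^2\delta^0=D^0\delta^1$; $D^1$ is the unique 1-cell with $D^1\delta^1=D^2\delta^1$, $D^1\delta^0=D^0\delta^0$, $\mathrm{id}_{D^1}\ast\alpha=(\mathrm{id}_{D^0}\ast\alpha)\cdot(\mathrm{id}_{D^2}\ast\alpha)$; $s^0$ is unique with $s^0\delta^0=s^0\delta^1=\mathrm{id}_b$, $\mathrm{id}_{s^0}\ast\alpha=\mathrm{id}_p$. $\mathrm{Desc}_p(y)$: pairs $(h:y\to b,\beta:\delta^1h\Rightarrow\delta^0h)$ with $(\mathrm{id}_{D^0}\ast\beta)\cdot(\mathrm{id}_{D^2}\ast\beta)=\mathrm{id}_{D^1}\ast\beta$, $\mathrm{id}_{s^0}\ast\beta=\mathrm{id}_h$, morphisms $\xi:h_1\Rightarrow h_0$ with $\beta_0\cdot(\mathrm{id}_{\delta^1}\ast\xi)=(\mathrm{id}_{\delta^0}\ast\xi)\cdot\beta_1$;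 a lax descent object is $L$, $d:L\to b$, $\Psi:\delta^1d\Rightarrow\delta^0d$ with $g\mapsto(dg,\Psi\ast\mathrm{id}_g)$ an isomorphism $\mathbb{B}(y,L)\cong\mathrm{Desc}_p(y)$ for all $y$; $p^H$ is unique with $dp^H=p$, $\Psi\ast\mathrm{id}_{p^H}=\alpha$. $p$ is effective faithful in $\mathbb{B}$ if $\mathbb{B}$ has the two-dimensional cokernel diagram of $p$, a lax descent object of it, and $p^H$ is an equivalence. A right Kan extension of $f$ along $g$ is $(r,\gamma:rg\Rightarrow f)$ with $\beta\mapsto\gamma\cdot(\beta\ast\mathrm{id}_g)$ bijective from 2-cells $k\Rightarrow r$ to 2-cells $kg\Rightarrow f$; $\delta$ preserves it if $(\delta r,\mathrm{id}_\delta\ast\gamma)$ is a right Kan extension of $\delta f$ along $g$. The codensity monad of $p$ is $(b,t,m,\eta)$ from a right Kan extension $(t,\gamma)$ of $p$ along $p$, $m$ unique with $\gamma\cdot(m\ast\mathrm{id}_p)=\gamma\cdot(\mathrm{id}_t\ast\gamma)$, $\eta$ unique with $\gamma\cdot(\eta\ast\mathrm{id}_p)=\mathrm{id}_p$. An Eilenberg–Moore object is $b^{\mathsf{T}}$ with $u$, $\mu:tu\Rightarrow u$ such that $g\mapsto(ug,\mu\ast\mathrm{id}_g)$ is an isomorphism onto the category of pairs $(h,\beta:th\Rightarrow h)$ with $\beta\cdot(\mathrm{id}_t\ast\beta)=\beta\cdot(m\ast\mathrm{id}_h)$, $\beta\cdot(\eta\ast\mathrm{id}_h)=\mathrm{id}_h$.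 $p$ is monadic in $\mathbb{B}$ if it has a codensity monad with an Eilenberg–Moore object and the unique $p^{\mathsf{T}}$ with $up^{\mathsf{T}}=p$, $\mu\ast\mathrm{id}_{p^{\mathsf{T}}}=\gamma$ is an equivalence. Duals in $\mathbb{A}$: the two-dimensional kernel diagram of $l$ is its two-dimensional cokernel diagram in $\mathbb{A}^{\mathrm{op}}$; its opcomma object in $\mathbb{A}^{\mathrm{op}}$ is a comma object $b\downarrow^lb$ in $\mathbb{A}$, and $\delta_0,\delta_1:b\downarrow^lb\to b$ are the 1-cells of $\mathbb{A}$ corresponding to $\delta^0,\delta^1$ in $\mathbb{A}^{\mathrm{op}}$. The right lifting of $l$ through $l$ is the right Kan extension of $l$ along $l$ in $\mathbb{A}^{\mathrm{op}}$, respected by a 1-cell if preserved by it in $\mathbb{A}^{\mathrm{op}}$; the left lifting and its respect are the same notions in $\mathbb{A}^{\mathrm{coop}}$. $l$ is effective op-faithful if it is effective faithful in $\mathbb{A}^{\mathrm{op}}$; $l$ is a Kleisli morphism if it is monadic in $\mathbb{A}^{\mathrm{op}}$, and a co-Kleisli morphism if it is monadic in $\mathbb{A}^{\mathrm{coop}}$. *)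

Set Implicit Arguments.
Unset Strict Implicit.

(* 1-cells hom a b; 2-cells of the hom-category (a,b) form the type cell a b,
   each 2-cell α having a source src α and target tgt α (α : src α ⇒ tgt α).
   comp g f = gf (juxtaposition: first f then g); vcomp β α = β · α;
   hcomp β α = β ∗ α; id2 f = id_f. *)
Record TwoCatData := {
  ob : Type;
  hom : ob -> ob -> Type;
  cell : ob -> ob -> Type;
  src : forall a b, cell a b -> hom a b;
  tgt : forall a b, cell a b -> hom a b;
  id1 : forall a, hom a a;
  comp : forall a b c, hom b c -> hom a b -> hom a c;
  id2 : forall a b, hom a b -> cell a b;
  vcomp : forall a b, cell a b -> cell a b -> cell a b;
  hcomp : forall a b c, cell b c -> cell a b -> cell a c
}.
Arguments id1 {_} a.
Arguments hom : clear implicits.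
Arguments cell : clear implicits.

Record TwoCatLaws (C : TwoCatData) : Prop := {
  compA : forall a b c d (h : hom C c d) (g : hom C b c) (f : hom C a b),
      comp h (comp g f) = comp (comp h g) f;
  comp1l : forall a b (f : hom C a b), comp (id1 b) f = f;
  comp1r : forall a b (f : hom C a b), comp f (id1 a) = f;
  src_id2 : forall a b (f : hom C a b), src (id2 f) = f;
  tgt_id2 : forall a b (f : hom C a b), tgt (id2 f) = f;
  src_vcomp : forall a b (β α : cell C a b), tgt α = src β -> src (vcomp β α) = src α;
  tgt_vcomp : forall a b (β α : cell C a b), tgt α = src β -> tgt (vcomp β α) = tgt β;
  src_hcomp : forall a b c (β : cell C b c) (α : cell C a b),
      src (hcomp β α) = comp (src β) (src α);
  tgt_hcomp : forall a b c (β : cell C b c) (α : cell C a b),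
      tgt (hcomp β α) = comp (tgt β) (tgt α);
  vcompA : forall a b (γ β α : cell C a b), tgt α = src β -> tgt β = src γ ->
      vcomp γ (vcomp β α) = vcomp (vcomp γ β) α;
  vcomp_id2l : forall a b (α : cell C a b), vcomp (id2 (tgt α)) α = α;
  vcomp_id2r : forall a b (α : cell C a b), vcomp α (id2 (src α)) = α;
  hcompA : forall a b c d (γ : cell C c d) (β : cell C b c) (α : cell C a b),
      hcomp γ (hcomp β α) = hcomp (hcomp γ β) α;
  hcomp_id2l : forall a b (α : cell C a b), hcomp (id2 (id1 b)) α = α;
  hcomp_id2r : forall a b (α : cell C a b), hcomp α (id2 (id1 a)) = α;
  hcomp_id2 : forall a b c (g : hom C b c) (f : hom C a b),
      hcomp (id2 g) (id2 f) = id2 (comp g f);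
  interchange : forall a b c (β β' : cell C b c) (α α' : cell C a b),
      tgt α = src α' -> tgt β = src β' ->
      hcomp (vcomp β' β) (vcomp α' α) = vcomp (hcomp β' α') (hcomp β α)
}.

Record TwoCat := { tc_data :> TwoCatData; tc_laws : TwoCatLaws tc_data }.

Definition op2 (C : TwoCatData) : TwoCatData := {|
  ob := ob C;
  hom := fun a b => hom C b a;
  cell := fun a b => cell C b a;
  src := fun a b α => src α;
  tgt := fun a b α => tgt α;
  id1 := fun a => id1 a;
  comp := fun a b c g f => comp f g;
  id2 := fun a b f => id2 f;
  vcomp := fun a b β α => vcomp β α;
  hcomp := fun a b c β α => hcomp α β |}.

Definition co2 (C : TwoCatData) : TwoCatData := {|
  ob := ob C;
  hom := fun a b => hom C a b;
  cell := fun a b => cell C a b;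
  src := fun a b α => tgt α;
  tgt := fun a b α => src α;
  id1 := fun a => id1 a;
  comp := fun a b c g f => comp g f;
  id2 := fun a b f => id2 f;
  vcomp := fun a b β α => vcomp α β;
  hcomp := fun a b c β α => hcomp β α |}.

Definition coop2 (C : TwoCatData) : TwoCatData := co2 (op2 C).

Lemma op2_laws (C : TwoCatData) : TwoCatLaws C -> TwoCatLaws (op2 C).
Proof.
  intros [] ; constructor; simpl; intros; eauto; symmetry; eauto.
Qed.

Lemma co2_laws (C : TwoCatData) : TwoCatLaws C -> TwoCatLaws (co2 C).
Proof.
  intros [] ; constructor; simpl; intros; eauto; symmetry; eauto.
Qed.

Definition op2c (A : TwoCat) : TwoCat := {| tc_data := op2 A; tc_laws := op2_laws (tc_laws A) |}.
Definition co2c (A : TwoCat) : TwoCat := {| tc_data := co2 A; tc_laws := co2_laws (tc_laws A) |}.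
Definition coop2c (A : TwoCat) : TwoCat := co2c (op2c A).

Section Notions.
Variable B : TwoCatData.

Definition is_cell a b (α : cell B a b) (f g : hom B a b) := src α = f /\ tgt α = g.
Definition wl a b c (h : hom B b c) (α : cell B a b) : cell B a c := hcomp (id2 h) α.
Definition wr a b c (α : cell B b c) (h : hom B a b) : cell B a c := hcomp α (id2 h).

Definition invertible a b (η : cell B a b) :=
  exists η' : cell B a b, is_cell η' (tgt η) (src η) /\
    vcomp η' η = id2 (src η) /\ vcomp η η' = id2 (tgt η).

Definition equivalence a b (f : hom B a b) :=
  exists (g : hom B b a) (η : cell B a a) (ε : cell B b b),
    is_cell η (comp g f) (id1 a) /\ invertible η /\
    is_cell ε (comp f g) (id1 b) /\ invertible ε.

Record opcomma e b (p : hom B e b) := {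
  oc : ob B;
  oc_d0 : hom B b oc;
  oc_d1 : hom B b oc;
  oc_alpha : cell B e oc;
  oc_alpha_cell : is_cell oc_alpha (comp oc_d1 p) (comp oc_d0 p);
  oc_obj : forall y (h0 h1 : hom B b y) (β : cell B e y),
      is_cell β (comp h1 p) (comp h0 p) ->
      exists! h : hom B oc y,
        comp h oc_d0 = h0 /\ comp h oc_d1 = h1 /\ wl h oc_alpha = β;
  oc_mor : forall y (h h' : hom B oc y) (ξ0 ξ1 : cell B b y),
      is_cell ξ0 (comp h oc_d0) (comp h' oc_d0) ->
      is_cell ξ1 (comp h oc_d1) (comp h' oc_d1) ->
      vcomp (wr ξ0 p) (wl h oc_alpha) = vcomp (wl h' oc_alpha) (wr ξ1 p) ->
      exists! ξ : cell B oc y, is_cell ξ h h' /\ wr ξ oc_d0 = ξ0 /\ wr ξ oc_d1 = ξ1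
}.

Record pushout2 a c0 c1 (f0 : hom B a c0) (f1 : hom B a c1) := {
  po : ob B;
  po_q0 : hom B c0 po;
  po_q1 : hom B c1 po;
  po_sq : comp po_q0 f0 = comp po_q1 f1;
  po_obj : forall y (k0 : hom B c0 y) (k1 : hom B c1 y),
      comp k0 f0 = comp k1 f1 ->
      exists! k : hom B po y, comp k po_q0 = k0 /\ comp k po_q1 = k1;
  po_mor : forall y (k k' : hom B po y) (ξ0 : cell B c0 y) (ξ1 : cell B c1 y),
      is_cell ξ0 (comp k po_q0) (comp k' po_q0) ->
      is_cell ξ1 (comp k po_q1) (comp k' po_q1) ->
      wr ξ0 f0 = wr ξ1 f1 ->
      exists! ξ : cell B po y, is_cell ξ k k' /\ wr ξ po_q0 = ξ0 /\ wr ξ po_q1 = ξ1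
}.

(* two-dimensional cokernel diagram of p.  The pushout is of (δ^0, δ^1),
   with D^2 := po_q0 (paired with δ^0) and D^0 := po_q1 (paired with δ^1),
   so that D^2 δ^0 = D^0 δ^1.  D^1 and s^0 are the (unique) 1-cells with the
   stated properties. *)
Record cokernel2 e b (p : hom B e b) := {
  ck_oc : opcomma p;
  ck_po : pushout2 (oc_d0 ck_oc) (oc_d1 ck_oc);
  ck_D1 : hom B (oc ck_oc) (po ck_po);
  ck_D1_d1 : comp ck_D1 (oc_d1 ck_oc) = comp (po_q0 ck_po) (oc_d1 ck_oc);
  ck_D1_d0 : comp ck_D1 (oc_d0 ck_oc) = comp (po_q1 ck_po) (oc_d0 ck_oc);
  ck_D1_alpha : wl ck_D1 (oc_alpha ck_oc)
      = vcomp (wl (po_q1 ck_po) (oc_alpha ck_oc)) (wl (po_q0 ck_po) (oc_alpha ck_oc));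
  ck_s0 : hom B (oc ck_oc) b;
  ck_s0_d0 : comp ck_s0 (oc_d0 ck_oc) = id1 b;
  ck_s0_d1 : comp ck_s0 (oc_d1 ck_oc) = id1 b;
  ck_s0_alpha : wl ck_s0 (oc_alpha ck_oc) = id2 p
}.

Definition ck_D0 e b (p : hom B e b) (K : cokernel2 p) := po_q1 (ck_po K).
Definition ck_D2 e b (p : hom B e b) (K : cokernel2 p) := po_q0 (ck_po K).
Definition ck_d0 e b (p : hom B e b) (K : cokernel2 p) := oc_d0 (ck_oc K).
Definition ck_d1 e b (p : hom B e b) (K : cokernel2 p) := oc_d1 (ck_oc K).

Definition desc_datum e b (p : hom B e b) (K : cokernel2 p) y
    (h : hom B y b) (β : cell B y (oc (ck_oc K))) :=
  is_cell β (comp (ck_d1 K) h) (comp (ck_d0 K) h) /\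
  vcomp (wl (ck_D0 K) β) (wl (ck_D2 K) β) = wl (ck_D1 K) β /\
  wl (ck_s0 K) β = id2 h.
Arguments desc_datum {e b p} K {y} h β.

Record laxdesc e b (p : hom B e b) (K : cokernel2 p) := {
  ld_L : ob B;
  ld_d : hom B ld_L b;
  ld_Psi : cell B ld_L (oc (ck_oc K));
  ld_datum : desc_datum K ld_d ld_Psi;
  ld_obj : forall y (h : hom B y b) (β : cell B y (oc (ck_oc K))),
      desc_datum K h β ->
      exists! g : hom B y ld_L, comp ld_d g = h /\ wr ld_Psi g = β;
  ld_mor : forall y (g g' : hom B y ld_L) (ξ : cell B y b),
      is_cell ξ (comp ld_d g) (comp ld_d g') ->
      vcomp (wr ld_Psi g') (wl (ck_d1 K) ξ) = vcomp (wl (ck_d0 K) ξ) (wr ld_Psi g) ->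
      exists! ζ : cell B y ld_L, is_cell ζ g g' /\ wl ld_d ζ = ξ
}.

Definition effective_faithful e b (p : hom B e b) :=
  exists (K : cokernel2 p) (D : laxdesc K) (pH : hom B e (ld_L D)),
    comp (ld_d D) pH = p /\ wr (ld_Psi D) pH = oc_alpha (ck_oc K) /\ equivalence pH.

Definition is_ran a b c (f : hom B a c) (g : hom B a b) (r : hom B b c) (γ : cell B a c) :=
  is_cell γ (comp r g) f /\
  forall (k : hom B b c) (θ : cell B a c), is_cell θ (comp k g) f ->
    exists! β : cell B b c, is_cell β k r /\ vcomp γ (wr β g) = θ.

Definition preserves_ran a b c c' (δ : hom B c c') (f : hom B a c) (g : hom B a b)
    (r : hom B b c) (γ : cell B a c) :=
  is_ran (comp δ f) g (comp δ r) (wl δ γ).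

Definition is_codensity e b (p : hom B e b) (t : hom B b b) (γ : cell B e b)
    (m η : cell B b b) :=
  is_ran p p t γ /\
  is_cell m (comp t t) t /\ vcomp γ (wr m p) = vcomp γ (wl t γ) /\
  is_cell η (id1 b) t /\ vcomp γ (wr η p) = id2 p.

Definition is_alg b (t : hom B b b) (m η : cell B b b) y (h : hom B y b) (β : cell B y b) :=
  is_cell β (comp t h) h /\
  vcomp β (wl t β) = vcomp β (wr m h) /\
  vcomp β (wr η h) = id2 h.

Record EMobj b (t : hom B b b) (m η : cell B b b) := {
  em_ob : ob B;
  em_u : hom B em_ob b;
  em_mu : cell B em_ob b;
  em_alg : is_alg t m η em_u em_mu;
  em_obj : forall y (h : hom B y b) (β : cell B y b), is_alg t m η h β ->
      exists! g : hom B y em_ob, comp em_u g = h /\ wr em_mu g = β;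
  em_mor : forall y (g g' : hom B y em_ob) (ξ : cell B y b),
      is_cell ξ (comp em_u g) (comp em_u g') ->
      vcomp (wr em_mu g') (wl t ξ) = vcomp ξ (wr em_mu g) ->
      exists! ζ : cell B y em_ob, is_cell ζ g g' /\ wl em_u ζ = ξ
}.

Definition monadic e b (p : hom B e b) :=
  exists (t : hom B b b) (γ : cell B e b) (m η : cell B b b),
    is_codensity p t γ m η /\
    exists (E : EMobj t m η) (pT : hom B e (em_ob E)),
      comp (em_u E) pT = p /\ wr (em_mu E) pT = γ /\ equivalence pT.

End Notions.

Definition kernel2 (A : TwoCat) (b e : ob A) (l : hom A b e) :=
  @cokernel2 (op2 A) e b l.

Definition ker_delta0 (A : TwoCat) b e (l : hom A b e) (K : kernel2 l)
  : hom A (oc (ck_oc K)) b := oc_d0 (ck_oc K).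
Definition ker_delta1 (A : TwoCat) b e (l : hom A b e) (K : kernel2 l)
  : hom A (oc (ck_oc K)) b := oc_d1 (ck_oc K).

Definition is_rift (A : TwoCat) b e (l : hom A b e) (r : hom A b b) (γ : cell A b e) :=
  @is_ran (op2 A) e b b l l r γ.
Definition respects_rift (A : TwoCat) b e c (δ : hom A c b) (l : hom A b e)
    (r : hom A b b) (γ : cell A b e) :=
  @preserves_ran (op2 A) e b b c δ l l r γ.

Definition is_lift (A : TwoCat) b e (l : hom A b e) (r : hom A b b) (γ : cell A b e) :=
  @is_ran (coop2 A) e b b l l r γ.
Definition respects_lift (A : TwoCat) b e c (δ : hom A c b) (l : hom A b e)
    (r : hom A b b) (γ : cell A b e) :=
  @preserves_ran (coop2 A) e b b c δ l l r γ.

Definition effective_op_faithful (A : TwoCat) b e (l : hom A b e) :=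
  @effective_faithful (op2 A) e b l.
Definition kleisli (A : TwoCat) b e (l : hom A b e) := @monadic (op2 A) e b l.
Definition co_kleisli (A : TwoCat) b e (l : hom A b e) := @monadic (coop2 A) e b l.

Set Implicit Arguments.
Unset Strict Implicit.

(* Dualising, both parts say: in a 2-category with the cokernel diagram of [p : e -> b], if
   [(t, γ) = Ran_p p] exists and is preserved by [δ^0], then [p] is monadic iff it is effective
   faithful.  Preservation by [δ^0] factors [α : δ^1 p => δ^0 p] as [δ^0 γ · (ah ∗ p)] for a
   unique [ah : δ^1 => δ^0 t], and the opcomma property gives [k] with [k δ^0 = 1], [k δ^1 = t],
   [k α = γ].  Then [β |-> k ∗ β] and [X |-> (δ^0 ∗ X) · (ah ∗ h)] are inverse bijections,
   natural in [h], between descent data on [h] and [T]-algebra structures on [h]; they match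
   the cocycle condition with associativity, normalisation with the unit law, and morphisms
   with morphisms.  So [Desc_p] and [Alg_T] are isomorphic over [B(-, b)], and a lax descent
   object is the same as an Eilenberg-Moore object, [p^H] corresponding to [p^T]. *)

Section Whiskering.
Context {C : TwoCatData} (L : TwoCatLaws C).

Lemma src_wl a b c (h : hom C b c) (α : cell C a b) : src (wl h α) = comp h (src α).
Proof. unfold wl. rewrite (src_hcomp L), (src_id2 L). reflexivity. Qed.

Lemma tgt_wl a b c (h : hom C b c) (α : cell C a b) : tgt (wl h α) = comp h (tgt α).
Proof. unfold wl. rewrite (tgt_hcomp L), (tgt_id2 L). reflexivity. Qed.

Lemma src_wr a b c (α : cell C b c) (h : hom C a b) : src (wr α h) = comp (src α) h.
Proof. unfold wr. rewrite (src_hcomp L), (src_id2 L). reflexivity. Qed.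

Lemma tgt_wr a b c (α : cell C b c) (h : hom C a b) : tgt (wr α h) = comp (tgt α) h.
Proof. unfold wr. rewrite (tgt_hcomp L), (tgt_id2 L). reflexivity. Qed.

Lemma vcomp_id2l_eq a b (α : cell C a b) g : tgt α = g -> vcomp (id2 g) α = α.
Proof. intros <-. apply (vcomp_id2l L). Qed.

Lemma vcomp_id2r_eq a b (α : cell C a b) g : src α = g -> vcomp α (id2 g) = α.
Proof. intros <-. apply (vcomp_id2r L). Qed.

Lemma vcomp_id2_id2 a b (f : hom C a b) : vcomp (id2 f) (id2 f) = id2 f.
Proof. apply vcomp_id2l_eq, (tgt_id2 L). Qed.

Lemma wl_vcomp a b c (h : hom C b c) (β α : cell C a b) :
  tgt α = src β -> wl h (vcomp β α) = vcomp (wl h β) (wl h α).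
Proof.
  intros H. unfold wl.
  rewrite <- (interchange L), vcomp_id2_id2; [reflexivity | exact H |].
  rewrite (tgt_id2 L), (src_id2 L). reflexivity.
Qed.

Lemma wr_vcomp a b c (β α : cell C b c) (h : hom C a b) :
  tgt α = src β -> wr (vcomp β α) h = vcomp (wr β h) (wr α h).
Proof.
  intros H. unfold wr.
  rewrite <- (interchange L), vcomp_id2_id2; [reflexivity | | exact H].
  rewrite (tgt_id2 L), (src_id2 L). reflexivity.
Qed.

Lemma wl_wl a b c d (f : hom C c d) (g : hom C b c) (α : cell C a b) :
  wl f (wl g α) = wl (comp f g) α.
Proof. unfold wl. rewrite (hcompA L), (hcomp_id2 L). reflexivity. Qed.

Lemma wr_wr a b c d (α : cell C c d) (g : hom C b c) (f : hom C a b) :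
  wr (wr α g) f = wr α (comp g f).
Proof. unfold wr. rewrite <- (hcompA L), (hcomp_id2 L). reflexivity. Qed.

Lemma wl_wr a b c d (f : hom C c d) (α : cell C b c) (g : hom C a b) :
  wl f (wr α g) = wr (wl f α) g.
Proof. unfold wl, wr. rewrite (hcompA L). reflexivity. Qed.

Lemma wl_id1 a b (α : cell C a b) : wl (id1 b) α = α.
Proof. apply (hcomp_id2l L). Qed.

Lemma wr_id1 a b (α : cell C a b) : wr α (id1 a) = α.
Proof. apply (hcomp_id2r L). Qed.

Lemma wl_id2 a b c (f : hom C b c) (g : hom C a b) : wl f (id2 g) = id2 (comp f g).
Proof. apply (hcomp_id2 L). Qed.

Lemma wr_id2 a b c (g : hom C b c) (f : hom C a b) : wr (id2 g) f = id2 (comp g f).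
Proof. apply (hcomp_id2 L). Qed.

Lemma whisker_exchange a b c (α : cell C a b) (β : cell C b c) f f' g g' :
  src α = f -> tgt α = f' -> src β = g -> tgt β = g' ->
  vcomp (wl g' α) (wr β f) = vcomp (wr β f') (wl g α).
Proof.
  intros <- <- <- <-. unfold wl, wr.
  transitivity (hcomp β α);
    [| symmetry]; rewrite <- (interchange L), (vcomp_id2l L), (vcomp_id2r L);
    solve [reflexivity | apply (tgt_id2 L) | symmetry; apply (src_id2 L)].
Qed.

Lemma compA_rewrite b c d (f : hom C c d) (g : hom C b c) (h : hom C b d) :
  comp f g = h -> forall x (k : hom C x b), comp f (comp g k) = comp h k.
Proof. intros H x k. rewrite (compA L), H. reflexivity. Qed.

Lemma vcomp_congr_precomp a b (x y u v r : cell C a b) :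
  vcomp x y = vcomp u v -> tgt r = src y -> tgt y = src x -> tgt r = src v -> tgt v = src u ->
  vcomp x (vcomp y r) = vcomp u (vcomp v r).
Proof.
  intros E H1 H2 H3 H4. rewrite !(vcompA L) by assumption. rewrite E. reflexivity.
Qed.

End Whiskering.

(* [solve_boundary L] proves an equation [src κ = f] or [tgt κ = f] for a composite cell κ,
   using the boundaries of its constituents and the 1-cell equations in the context;
   [whisker_normalize L] pushes whiskerings inward, reassociates and drops identities. *)
Ltac boundary_step L :=
  first [ match goal with H : src ?x = _ |- context [src ?x] => rewrite H end
        | match goal with H : tgt ?x = _ |- context [tgt ?x] => rewrite H end
        | rewrite (src_wl L) | rewrite (tgt_wl L) | rewrite (src_wr L) | rewrite (tgt_wr L)
        | rewrite (src_id2 L) | rewrite (tgt_id2 L) | rewrite (src_hcomp L) | rewrite (tgt_hcomp L)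
        | rewrite (src_vcomp L) by (solve_boundary L)
        | rewrite (tgt_vcomp L) by (solve_boundary L) ]
with normalize_comp L :=
  repeat (rewrite <- (compA L)); repeat (rewrite (comp1l L)); repeat (rewrite (comp1r L))
with rewrite_comp_eqs L :=
  repeat match goal with
  | H : comp ?f ?g = _ |- context [comp ?f ?g] => rewrite H
  | H : comp ?f ?g = _ |- context [comp ?f (comp ?g _)] => rewrite (compA_rewrite L H)
  end
with solve_boundary L :=
  repeat (boundary_step L);
  repeat (progress (normalize_comp L; rewrite_comp_eqs L)); reflexivity.

Ltac whisker_normalize L :=
  repeat (progress (
    repeat (rewrite (wl_vcomp L) by (solve_boundary L));
    repeat (rewrite (wr_vcomp L) by (solve_boundary L));
    repeat (rewrite (wl_wl L)); repeat (rewrite (wr_wr L)); repeat (rewrite (wl_wr L));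
    repeat (rewrite (wl_id2 L)); repeat (rewrite (wr_id2 L));
    repeat (rewrite (wl_id1 L)); repeat (rewrite (wr_id1 L));
    normalize_comp L; rewrite_comp_eqs L;
    repeat (rewrite (vcomp_id2l_eq L) by (solve_boundary L));
    repeat (rewrite (vcomp_id2r_eq L) by (solve_boundary L));
    repeat (rewrite <- (vcompA L) by (solve_boundary L)))).

Section KanExtensions.
Context {C : TwoCatData} (L : TwoCatLaws C).

Lemma ran_boundary a b c (f : hom C a c) (g : hom C a b) r γ :
  is_ran f g r γ -> src γ = comp r g /\ tgt γ = f.
Proof. intros [H _]; exact H. Qed.

Lemma ran_factor a b c (f : hom C a c) (g : hom C a b) r γ :
  is_ran f g r γ -> forall k θ, is_cell θ (comp k g) f ->
  exists β, is_cell β k r /\ vcomp γ (wr β g) = θ.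
Proof. intros [_ H] k θ Hθ. destruct (H k θ Hθ) as [β [Hβ _]]. eauto. Qed.

Lemma ran_factor_unique a b c (f : hom C a c) (g : hom C a b) r γ :
  is_ran f g r γ -> forall k β1 β2, is_cell β1 k r -> is_cell β2 k r ->
  vcomp γ (wr β1 g) = vcomp γ (wr β2 g) -> β1 = β2.
Proof.
  intros [[Hs Ht] H] k β1 β2 [H1s H1t] [H2s H2t] E.
  assert (Hθ : is_cell (vcomp γ (wr β1 g)) (comp k g) f) by (split; solve_boundary L).
  destruct (H k _ Hθ) as [β [_ U]].
  transitivity β; [symmetry |]; apply U; repeat split; auto.
Qed.

Lemma preserves_ran_transfer a b c c' (δ : hom C c c') (f : hom C a c) (g : hom C a b)
    r γ r' γ' :
  is_ran f g r γ -> is_ran f g r' γ' -> preserves_ran δ f g r γ -> preserves_ran δ f g r' γ'.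
Proof.
  intros R1 R2 P.
  destruct (ran_boundary R1) as [Gs Gt]. destruct (ran_boundary R2) as [G's G't].
  destruct (ran_factor R1 (k := r') (θ := γ')) as [σ [[Ss St] Sσ]]; [split; assumption |].
  destruct (ran_factor R2 (k := r) (θ := γ)) as [τ [[Ts Tt] Tτ]]; [split; assumption |].
  assert (Hτσ : vcomp τ σ = id2 r').
  { apply (ran_factor_unique R2 (k := r')); try (split; solve_boundary L).
    rewrite (wr_vcomp L), (vcompA L), Tτ, Sσ, (wr_id2 L), (vcomp_id2r_eq L);
      solve [reflexivity | solve_boundary L]. }
  split; [split; solve_boundary L |].
  intros k θ Hθ.
  destruct (ran_factor P Hθ) as [β0 [[B0s B0t] B0]].
  exists (vcomp (wl δ τ) β0). split.
  - split; [split; solve_boundary L |].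
    rewrite (wr_vcomp L), (vcompA L), <- (wl_wr L), <- (wl_vcomp L), Tτ by solve_boundary L.
    exact B0.
  - intros β' [[B's B't] B'].
    assert (E : vcomp (wl δ σ) β' = β0).
    { apply (ran_factor_unique P (k := k)); try (split; solve_boundary L).
      rewrite B0, (wr_vcomp L), (vcompA L), <- (wl_wr L), <- (wl_vcomp L), Sσ
        by solve_boundary L.
      exact B'. }
    rewrite <- E, (vcompA L), <- (wl_vcomp L), Hτσ, (wl_id2 L) by solve_boundary L.
    apply (vcomp_id2l_eq L). solve_boundary L.
Qed.

Lemma preserves_ran_comp_iso a b c c' c'' (δ : hom C c c') (φ : hom C c' c'')
    (ψ : hom C c'' c') (f : hom C a c) (g : hom C a b) r γ :
  comp ψ φ = id1 c' -> comp φ ψ = id1 c'' ->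
  preserves_ran δ f g r γ -> preserves_ran (comp φ δ) f g r γ.
Proof.
  intros E1 E2 P.
  destruct (ran_boundary P) as [Gs Gt].
  split; [rewrite <- (wl_wl L); split; solve_boundary L |].
  intros k θ [Hs Ht].
  destruct (ran_factor P (k := comp ψ k) (θ := wl ψ θ)) as [β0 [[B0s B0t] B0]].
  { split; solve_boundary L. }
  exists (wl φ β0). split.
  - split; [split; solve_boundary L |].
    rewrite <- (wl_wl L), <- (wl_wr L), <- (wl_vcomp L), B0, (wl_wl L), E2, (wl_id1 L)
      by solve_boundary L.
    reflexivity.
  - intros β' [[B's B't] B']. rewrite <- (wl_wl L) in B'.
    assert (E : wl ψ β' = β0).
    { apply (ran_factor_unique P (k := comp ψ k)); try (split; solve_boundary L).
      rewrite B0, <- B', (wl_vcomp L), (wl_wl L ψ φ), E1, (wl_id1 L), (wl_wr L)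
        by solve_boundary L.
      reflexivity. }
    rewrite <- E, (wl_wl L), E2, (wl_id1 L). reflexivity.
Qed.

Lemma opcomma_unique_iso e b (p : hom C e b) (O O' : opcomma p) :
  exists (φ : hom C (oc O) (oc O')) (ψ : hom C (oc O') (oc O)),
    comp φ (oc_d0 O) = oc_d0 O' /\ comp ψ φ = id1 (oc O) /\ comp φ ψ = id1 (oc O').
Proof.
  assert (Hcomparison : forall O1 O2 : opcomma p, exists φ : hom C (oc O1) (oc O2),
    comp φ (oc_d0 O1) = oc_d0 O2 /\ comp φ (oc_d1 O1) = oc_d1 O2 /\
    wl φ (oc_alpha O1) = oc_alpha O2).
  { intros O1 O2. destruct (oc_alpha_cell O2) as [As At].
    destruct (oc_obj O1 (h0 := oc_d0 O2) (h1 := oc_d1 O2) (β := oc_alpha O2)) as [φ [Hφ _]]; [split; assumption |].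
    eauto. }
  assert (Hendo : forall (O1 : opcomma p) (χ : hom C (oc O1) (oc O1)),
    comp χ (oc_d0 O1) = oc_d0 O1 -> comp χ (oc_d1 O1) = oc_d1 O1 ->
    wl χ (oc_alpha O1) = oc_alpha O1 -> χ = id1 (oc O1)).
  { intros O1 χ H0 H1 Hα. destruct (oc_alpha_cell O1) as [As At].
    destruct (oc_obj O1 (h0 := oc_d0 O1) (h1 := oc_d1 O1) (β := oc_alpha O1)) as [u [_ U]]; [split; assumption |].
    transitivity u; [symmetry |]; apply U; auto.
    rewrite (comp1l L), (comp1l L), (wl_id1 L). auto. }
  destruct (Hcomparison O O') as [φ [F0 [F1 Fα]]].
  destruct (Hcomparison O' O) as [ψ [G0 [G1 Gα]]].
  exists φ, ψ. split; [exact F0 | split]; apply Hendo.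
  - rewrite <- (compA L), F0, G0. reflexivity.
  - rewrite <- (compA L), F1, G1. reflexivity.
  - rewrite <- (wl_wl L), Fα, Gα. reflexivity.
  - rewrite <- (compA L), G0, F0. reflexivity.
  - rewrite <- (compA L), G1, F1. reflexivity.
  - rewrite <- (wl_wl L), Gα, Fα. reflexivity.
Qed.

Lemma preserves_ran_opcomma_d0 e b (p : hom C e b) (O O' : opcomma p) c x
    (f : hom C c b) (g : hom C c x) r γ :
  preserves_ran (oc_d0 O) f g r γ -> preserves_ran (oc_d0 O') f g r γ.
Proof.
  destruct (opcomma_unique_iso O O') as [φ [ψ [F0 [E1 E2]]]].
  rewrite <- F0. exact (preserves_ran_comp_iso E1 E2).
Qed.

Lemma ran_codensity e b (p : hom C e b) t γ :
  is_ran p p t γ -> exists m η, is_codensity p t γ m η.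
Proof.
  intros R. destruct (ran_boundary R) as [Gs Gt].
  destruct (ran_factor R (k := comp t t) (θ := vcomp γ (wl t γ))) as [m [Hm Em]].
  { split; solve_boundary L. }
  destruct (ran_factor R (k := id1 b) (θ := id2 p)) as [η [Hη Eη]].
  { split; solve_boundary L. }
  exists m, η. split; [exact R |]. destruct Hm, Hη. repeat split; assumption.
Qed.

End KanExtensions.

Definition effective_faithful_at {B : TwoCatData} {e b : ob B} {p : hom B e b}
    (K : cokernel2 p) :=
  exists (D : laxdesc K) (pH : hom B e (ld_L D)),
    comp (ld_d D) pH = p /\ wr (ld_Psi D) pH = oc_alpha (ck_oc K) /\ equivalence pH.

Section Comparison.
Context {B : TwoCatData} (L : TwoCatLaws B) {e b : ob B} (p : hom B e b) (K : cokernel2 p)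
  (t : hom B b b) (γ : cell B e b) (m η : cell B b b).
Hypothesis Hcod : is_codensity p t γ m η.

Local Notation O := (oc (ck_oc K)).
Local Notation d0 := (oc_d0 (ck_oc K)).
Local Notation d1 := (oc_d1 (ck_oc K)).
Local Notation al := (oc_alpha (ck_oc K)).
Local Notation P := (po (ck_po K)).
Local Notation D2 := (po_q0 (ck_po K)).
Local Notation D0 := (po_q1 (ck_po K)).
Local Notation D1 := (ck_D1 K).
Local Notation s0 := (ck_s0 K).

Let Hran : is_ran p p t γ := proj1 Hcod.
Let Hγs : src γ = comp t p := proj1 (proj1 Hran).
Let Hγt : tgt γ = p := proj2 (proj1 Hran).
Let Hms : src m = comp t t := proj1 (proj1 (proj2 Hcod)).
Let Hmt : tgt m = t := proj2 (proj1 (proj2 Hcod)).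
Let Hmγ : vcomp γ (wr m p) = vcomp γ (wl t γ) := proj1 (proj2 (proj2 Hcod)).
Let Hηs : src η = id1 b := proj1 (proj1 (proj2 (proj2 (proj2 Hcod)))).
Let Hηt : tgt η = t := proj2 (proj1 (proj2 (proj2 (proj2 Hcod)))).
Let Hηγ : vcomp γ (wr η p) = id2 p := proj2 (proj2 (proj2 (proj2 Hcod))).
Let Hals : src al = comp d1 p := proj1 (oc_alpha_cell (ck_oc K)).
Let Halt : tgt al = comp d0 p := proj2 (oc_alpha_cell (ck_oc K)).
Let Hsq : comp D2 d0 = comp D0 d1 := po_sq (ck_po K).
Let HD1d1 : comp D1 d1 = comp D2 d1 := ck_D1_d1 K.
Let HD1d0 : comp D1 d0 = comp D0 d0 := ck_D1_d0 K.
Let HD1al : wl D1 al = vcomp (wl D0 al) (wl D2 al) := ck_D1_alpha K.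
Let Hs0d0 : comp s0 d0 = id1 b := ck_s0_d0 K.
Let Hs0d1 : comp s0 d1 = id1 b := ck_s0_d1 K.
Let Hs0al : wl s0 al = id2 p := ck_s0_alpha K.

Lemma opcomma_map_exists : exists k : hom B O b, comp k d0 = id1 b /\ comp k d1 = t /\ wl k al = γ.
Proof.
  destruct (oc_obj (ck_oc K) (h0 := id1 b) (h1 := t) (β := γ)) as [k [Hk _]].
  { split; solve_boundary L. }
  eauto.
Qed.

Section ComparisonCells.
Variables (ah : cell B b O) (k : hom B O b).
Hypotheses (Hahs : src ah = d1) (Haht : tgt ah = comp d0 t)
  (Hah : vcomp (wl d0 γ) (wr ah p) = al)
  (Hk0 : comp k d0 = id1 b) (Hk1 : comp k d1 = t) (Hkal : wl k al = γ).

Lemma wl_k_ah : wl k ah = id2 t.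
Proof.
  apply (ran_factor_unique L Hran (k := t)); try (split; solve_boundary L).
  transitivity (wl k al).
  - rewrite <- Hah. whisker_normalize L. reflexivity.
  - rewrite Hkal. whisker_normalize L. reflexivity.
Qed.

Lemma wl_s0_ah : wl s0 ah = η.
Proof.
  apply (ran_factor_unique L Hran (k := id1 b)); try (split; solve_boundary L).
  rewrite Hηγ, <- Hs0al, <- Hah. whisker_normalize L. reflexivity.
Qed.

Definition desc_of_alg y (h : hom B y b) (X : cell B y b) : cell B y O :=
  vcomp (wl d0 X) (wr ah h).

Lemma wl_k_desc_of_alg y (h : hom B y b) (X : cell B y b) :
  src X = comp t h -> wl k (desc_of_alg h X) = X.
Proof.
  intros HX. unfold desc_of_alg. pose proof wl_k_ah as E.
  whisker_normalize L. rewrite E. whisker_normalize L. reflexivity.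
Qed.

Lemma desc_of_alg_inj y (h : hom B y b) (X Y : cell B y b) :
  src X = comp t h -> src Y = comp t h -> desc_of_alg h X = desc_of_alg h Y -> X = Y.
Proof.
  intros HX HY E. rewrite <- (wl_k_desc_of_alg HX), <- (wl_k_desc_of_alg HY), E. reflexivity.
Qed.

Lemma desc_of_alg_wr y z (h : hom B y b) (X : cell B y b) (g : hom B z y) :
  src X = comp t h -> wr (desc_of_alg h X) g = desc_of_alg (comp h g) (wr X g).
Proof. intros HX. unfold desc_of_alg. whisker_normalize L. reflexivity. Qed.

Lemma wl_s0_desc_of_alg y (h : hom B y b) (X : cell B y b) :
  src X = comp t h -> wl s0 (desc_of_alg h X) = vcomp X (wr η h).
Proof.
  intros HX. unfold desc_of_alg. pose proof wl_s0_ah as E.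
  whisker_normalize L. rewrite E. reflexivity.
Qed.

Lemma desc_of_alg_hom_iff y (h h' : hom B y b) (β β' ξ : cell B y b) :
  src β = comp t h -> tgt β = h -> src β' = comp t h' -> tgt β' = h' ->
  src ξ = h -> tgt ξ = h' ->
  (vcomp (desc_of_alg h' β') (wl d1 ξ) = vcomp (wl d0 ξ) (desc_of_alg h β) <->
   vcomp β' (wl t ξ) = vcomp ξ β).
Proof.
  intros H1 H2 H3 H4 H5 H6.
  assert (Hlhs : vcomp (desc_of_alg h' β') (wl d1 ξ) = desc_of_alg h (vcomp β' (wl t ξ))).
  { unfold desc_of_alg.
    rewrite <- (vcompA L), <- (whisker_exchange L H5 H6 Hahs Haht) by solve_boundary L.
    whisker_normalize L. reflexivity. }
  assert (Hrhs : vcomp (wl d0 ξ) (desc_of_alg h β) = desc_of_alg h (vcomp ξ β)).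
  { unfold desc_of_alg. rewrite (vcompA L), <- (wl_vcomp L) by solve_boundary L.
    reflexivity. }
  rewrite Hlhs, Hrhs. split.
  - apply desc_of_alg_inj; solve_boundary L.
  - intros ->. reflexivity.
Qed.

Lemma unit_d0k_exists : exists ε : cell B O O,
  src ε = id1 O /\ tgt ε = comp d0 k /\ wr ε d0 = id2 d0 /\ wr ε d1 = ah.
Proof.
  destruct (oc_mor (o := ck_oc K) (h := id1 O) (h' := comp d0 k) (ξ0 := id2 d0) (ξ1 := ah))
    as [ε [[[E1 E2] [E3 E4]] _]].
  - split; solve_boundary L.
  - split; solve_boundary L.
  - rewrite <- (wl_wl L), Hkal, Hah. whisker_normalize L. reflexivity.
  - exists ε. auto.
Qed.

Lemma pushout_map_exists : exists r : hom B P b, comp r D2 = comp t k /\ comp r D0 = k.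
Proof.
  destruct (po_obj (ck_po K) (k0 := comp t k) (k1 := k)) as [r [Hr _]].
  - solve_boundary L.
  - eauto.
Qed.

Section Unit.
Variables (ε : cell B O O) (r : hom B P b).
Hypotheses (Hεs : src ε = id1 O) (Hεt : tgt ε = comp d0 k)
  (Hε0 : wr ε d0 = id2 d0) (Hε1 : wr ε d1 = ah)
  (Hr2 : comp r D2 = comp t k) (Hr0 : comp r D0 = k).

Lemma desc_of_alg_wl_k y (h : hom B y b) (β : cell B y O) :
  src β = comp d1 h -> tgt β = comp d0 h -> desc_of_alg h (wl k β) = β.
Proof.
  intros H1 H2. unfold desc_of_alg.
  transitivity (vcomp (wl (comp d0 k) β) (wr ε (comp d1 h))).
  - rewrite <- (wr_wr L), Hε1, (wl_wl L). reflexivity.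
  - rewrite (whisker_exchange L H1 H2 Hεs Hεt), <- (wr_wr L), Hε0, (wr_id2 L), (wl_id1 L).
    apply (vcomp_id2l_eq L). exact H2.
Qed.

Lemma pushout_unit_exists : exists Ω : cell B P P,
  src Ω = id1 P /\ tgt Ω = comp (comp D0 d0) r /\ wr Ω D0 = wl D0 ε.
Proof.
  destruct (po_mor (p := ck_po K) (k := id1 P) (k' := comp (comp D0 d0) r)
    (ξ0 := vcomp (wl D0 (wr ε (comp d1 k))) (wl D2 ε)) (ξ1 := wl D0 ε))
    as [Ω [[[E1 E2] [E3 E4]] _]].
  - split; solve_boundary L.
  - split; solve_boundary L.
  - rewrite (wr_vcomp L), <- !(wl_wr L), !(wr_wr L), Hε0 by solve_boundary L.
    normalize_comp L; rewrite_comp_eqs L; normalize_comp L.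
    rewrite Hε1. whisker_normalize L. reflexivity.
  - exists Ω. auto.
Qed.

Section PushoutUnit.
Variable Ω : cell B P P.
Hypotheses (HΩs : src Ω = id1 P) (HΩt : tgt Ω = comp (comp D0 d0) r) (HΩ0 : wr Ω D0 = wl D0 ε).

Local Notation ah_twice := (vcomp (wr (wl D0 ah) t) (wl D2 ah)).

Lemma cell_of_wl_r (x : hom B b P) (σ : cell B b P) :
  src σ = x -> tgt σ = comp D0 (comp d0 t) ->
  σ = vcomp (wl (comp (comp D0 d0) r) σ) (wr Ω x).
Proof.
  intros H1 H2.
  rewrite (whisker_exchange L H1 H2 HΩs HΩt), <- (wr_wr L), HΩ0, <- (wl_wr L), <- (wr_wr L),
    Hε0, (wr_id2 L), (wl_id2 L), (wl_id1 L).
  symmetry. apply (vcomp_id2l_eq L). solve_boundary L.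
Qed.

(* [D0 d0] need not preserve [Ran_p p], but by [cell_of_wl_r] a cell into [D0 d0 t] is
   determined by its whiskering with [r], where [Ran_p p] is available. *)
Lemma ran_factor_unique_D0d0 (x : hom B b P) (σ1 σ2 : cell B b P) :
  src σ1 = x -> tgt σ1 = comp D0 (comp d0 t) -> src σ2 = x -> tgt σ2 = comp D0 (comp d0 t) ->
  vcomp (wl (comp D0 d0) γ) (wr σ1 p) = vcomp (wl (comp D0 d0) γ) (wr σ2 p) -> σ1 = σ2.
Proof.
  intros H1 H2 H3 H4 E.
  assert (Hr : wl r σ1 = wl r σ2).
  { apply (ran_factor_unique L Hran (k := comp r x)); try (split; solve_boundary L).
    transitivity (wl r (vcomp (wl (comp D0 d0) γ) (wr σ1 p))).
    - whisker_normalize L. reflexivity.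
    - rewrite E. whisker_normalize L. reflexivity. }
  rewrite (cell_of_wl_r H1 H2), (cell_of_wl_r H3 H4), <- !(wl_wl L (comp D0 d0) r), Hr.
  reflexivity.
Qed.

Lemma wl_D1_ah : wl D1 ah = vcomp (wl (comp D0 d0) m) ah_twice.
Proof.
  apply (ran_factor_unique_D0d0 (x := comp D2 d1)); try solve_boundary L.
  transitivity (wl D1 al).
  - rewrite <- Hah. whisker_normalize L. reflexivity.
  - rewrite HD1al, (wr_vcomp L), (vcompA L), <- (wl_wr L), <- (wl_vcomp L), Hmγ, <- Hah
      by solve_boundary L.
    whisker_normalize L. f_equal.
    apply (vcomp_congr_precomp L); try solve_boundary L.
    symmetry. apply (whisker_exchange L (α := γ) (β := wl D0 ah)); solve_boundary L.
Qed.

Lemma cocycle_desc_of_alg y (h : hom B y b) (β : cell B y b) :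
  src β = comp t h -> tgt β = h ->
  vcomp (wl D0 (desc_of_alg h β)) (wl D2 (desc_of_alg h β)) =
  vcomp (wl (comp D0 d0) (vcomp β (wl t β))) (wr ah_twice h).
Proof.
  intros H1 H2. unfold desc_of_alg. whisker_normalize L. f_equal.
  apply (vcomp_congr_precomp L); try solve_boundary L.
  symmetry. apply (whisker_exchange L (α := β) (β := wl D0 ah)); solve_boundary L.
Qed.

Lemma wl_D1_desc_of_alg y (h : hom B y b) (β : cell B y b) :
  src β = comp t h -> tgt β = h ->
  wl D1 (desc_of_alg h β) = vcomp (wl (comp D0 d0) (vcomp β (wr m h))) (wr ah_twice h).
Proof.
  intros H1 H2. unfold desc_of_alg.
  rewrite (wl_vcomp L), (wl_wr L), wl_D1_ah by solve_boundary L.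
  whisker_normalize L. reflexivity.
Qed.

Lemma wl_r_ah_twice : wl r ah_twice = id2 (comp t t).
Proof.
  pose proof wl_k_ah as E.
  rewrite (wl_vcomp L), (wl_wr L), (wl_wl L r D0), Hr0, E, (wl_wl L r D2), Hr2,
    <- (wl_wl L t k), E by solve_boundary L.
  whisker_normalize L. reflexivity.
Qed.

Lemma wl_r_cancel y (h : hom B y b) (A : cell B y b) :
  src A = comp t (comp t h) -> wl r (vcomp (wl (comp D0 d0) A) (wr ah_twice h)) = A.
Proof.
  intros H. rewrite (wl_vcomp L), (wl_wr L), wl_r_ah_twice by solve_boundary L.
  whisker_normalize L. reflexivity.
Qed.

Lemma desc_of_alg_cocycle_iff y (h : hom B y b) (β : cell B y b) :
  src β = comp t h -> tgt β = h ->
  (vcomp (wl D0 (desc_of_alg h β)) (wl D2 (desc_of_alg h β)) = wl D1 (desc_of_alg h β) <->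
   vcomp β (wl t β) = vcomp β (wr m h)).
Proof.
  intros H1 H2. rewrite (cocycle_desc_of_alg H1 H2), (wl_D1_desc_of_alg H1 H2). split.
  - intros E. apply (f_equal (wl r)) in E. rewrite !wl_r_cancel in E by solve_boundary L. exact E.
  - intros ->. reflexivity.
Qed.

Lemma desc_datum_desc_of_alg_iff y (h : hom B y b) (β : cell B y b) :
  src β = comp t h -> tgt β = h ->
  (desc_datum (K := K) h (desc_of_alg h β) <-> is_alg t m η h β).
Proof.
  intros H1 H2. unfold desc_datum, is_alg, is_cell, ck_D0, ck_D2, ck_d0, ck_d1. split.
  - intros [_ [Hcocycle Hunit]]. split; [split; assumption | split].
    + apply (desc_of_alg_cocycle_iff H1 H2), Hcocycle.
    + rewrite <- (wl_s0_desc_of_alg H1). exact Hunit.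
  - intros [_ [Hassoc Hunit]]. split; [unfold desc_of_alg; split; solve_boundary L | split].
    + apply (desc_of_alg_cocycle_iff H1 H2), Hassoc.
    + rewrite (wl_s0_desc_of_alg H1). exact Hunit.
Qed.

Lemma alg_of_desc_datum y (h : hom B y b) (β : cell B y O) :
  desc_datum (K := K) h β -> is_alg t m η h (wl k β).
Proof.
  intros Hd. pose proof Hd as [[Hs Ht] _].
  apply desc_datum_desc_of_alg_iff; try solve_boundary L.
  rewrite desc_of_alg_wl_k by assumption. exact Hd.
Qed.

Definition laxdesc_of_EMobj (E : EMobj t m η) : laxdesc K.
Proof.
  refine (@Build_laxdesc B e b p K (em_ob E) (em_u E) (desc_of_alg (em_u E) (em_mu E)) _ _ _);
    pose proof (em_alg E) as [[Hμs Hμt] _].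
  - apply desc_datum_desc_of_alg_iff; auto. exact (em_alg E).
  - intros y h β Hd.
    destruct (em_obj E (alg_of_desc_datum Hd)) as [g [[Hg1 Hg2] U]].
    pose proof Hd as [[Hβs Hβt] _].
    exists g. split.
    + split; [exact Hg1 |].
      rewrite desc_of_alg_wr, Hg2, Hg1 by assumption. apply desc_of_alg_wl_k; assumption.
    + intros g' [Hg'1 Hg'2]. apply U. split; [exact Hg'1 |].
      rewrite <- Hg'2, desc_of_alg_wr, wl_k_desc_of_alg by solve_boundary L. reflexivity.
  - intros y g g' ξ Hξ Hc. destruct Hξ as [Hξs Hξt].
    unfold ck_d0, ck_d1 in Hc. rewrite !desc_of_alg_wr in Hc by assumption.
    apply desc_of_alg_hom_iff in Hc; try solve_boundary L.
    apply (em_mor (e := E)); [split |]; assumption.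
Defined.

Definition EMobj_of_laxdesc (D : laxdesc K) : EMobj t m η.
Proof.
  refine (@Build_EMobj B b t m η (ld_L D) (ld_d D) (wl k (ld_Psi D))
    (alg_of_desc_datum (ld_datum D)) _ _);
    pose proof (ld_datum D) as [[HΨs HΨt] _].
  - intros y h β Halg. pose proof Halg as [[Hβs Hβt] _].
    destruct (ld_obj D (proj2 (desc_datum_desc_of_alg_iff Hβs Hβt) Halg)) as [g [[Hg1 Hg2] U]].
    exists g. split.
    + split; [exact Hg1 |]. rewrite <- (wl_wr L), Hg2. apply wl_k_desc_of_alg; assumption.
    + intros g' [Hg'1 Hg'2]. apply U. split; [exact Hg'1 |].
      rewrite <- Hg'2, <- (wl_wr L), <- Hg'1. symmetry. apply desc_of_alg_wl_k; solve_boundary L.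
  - intros y g g' ξ Hξ Hc. destruct Hξ as [Hξs Hξt].
    apply (ld_mor (l := D)); [split; assumption |]. unfold ck_d0, ck_d1.
    rewrite <- (desc_of_alg_wl_k (β := wr (ld_Psi D) g')),
      <- (desc_of_alg_wl_k (β := wr (ld_Psi D) g)), !(wl_wr L k (ld_Psi D))
      by solve_boundary L.
    apply desc_of_alg_hom_iff; try solve_boundary L. exact Hc.
Defined.

Lemma effective_faithful_at_of_EMobj (E : EMobj t m η) (pT : hom B e (em_ob E)) :
  comp (em_u E) pT = p -> wr (em_mu E) pT = γ -> equivalence pT -> effective_faithful_at K.
Proof.
  intros HpT HμpT Heq. pose proof (em_alg E) as [[Hμs Hμt] _].
  exists (laxdesc_of_EMobj E), pT. simpl. split; [exact HpT | split; [| exact Heq]].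
  rewrite desc_of_alg_wr, HpT, HμpT by assumption. exact Hah.
Qed.

Lemma monadic_of_laxdesc (D : laxdesc K) (pH : hom B e (ld_L D)) :
  comp (ld_d D) pH = p -> wr (ld_Psi D) pH = al -> equivalence pH -> monadic p.
Proof.
  intros HpH HΨpH Heq. exists t, γ, m, η. split; [exact Hcod |].
  exists (EMobj_of_laxdesc D), pH. simpl. split; [exact HpH | split; [| exact Heq]].
  rewrite <- (wl_wr L), HΨpH. exact Hkal.
Qed.

End PushoutUnit.
End Unit.
End ComparisonCells.

Hypothesis Hpres : preserves_ran d0 p p t γ.

Lemma EMobj_laxdesc_correspondence :
  (forall (E : EMobj t m η) (pT : hom B e (em_ob E)),
     comp (em_u E) pT = p -> wr (em_mu E) pT = γ -> equivalence pT ->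
     effective_faithful_at K) /\
  (forall (D : laxdesc K) (pH : hom B e (ld_L D)),
     comp (ld_d D) pH = p -> wr (ld_Psi D) pH = al -> equivalence pH -> monadic p).
Proof.
  destruct (ran_factor Hpres (k := d1) (θ := al)) as [ah [[Hahs Haht] Hah]].
  { split; solve_boundary L. }
  destruct opcomma_map_exists as [k [Hk0 [Hk1 Hkal]]].
  destruct (unit_d0k_exists Hahs Haht Hah Hk0 Hk1 Hkal) as [ε [Hεs [Hεt [Hε0 Hε1]]]].
  destruct (pushout_map_exists Hk0 Hk1) as [r [Hr2 Hr0]].
  destruct (pushout_unit_exists Hahs Hk0 Hk1 Hεs Hεt Hε0 Hε1 Hr2 Hr0) as [Ω [HΩs [HΩt HΩ0]]].
  split; intros.
  - eapply effective_faithful_at_of_EMobj; eassumption.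
  - eapply monadic_of_laxdesc; eassumption.
Qed.

End Comparison.

Section MonadicityCriterion.
Context {B : TwoCatData} (L : TwoCatLaws B) {e b : ob B} (p : hom B e b) (K : cokernel2 p).
Hypothesis Hran_pres :
  exists r γ, is_ran p p r γ /\ preserves_ran (oc_d0 (ck_oc K)) p p r γ.

Lemma monadic_effective_faithful_at : monadic p -> effective_faithful_at K.
Proof.
  destruct Hran_pres as [r [γ [Hran Hpres]]].
  intros [t [γ' [m [η [Hcod [E [pT [HpT [HμpT Heq]]]]]]]]].
  pose proof (preserves_ran_transfer L Hran (proj1 Hcod) Hpres) as Hpres'.
  exact (proj1 (EMobj_laxdesc_correspondence L Hcod Hpres') E pT HpT HμpT Heq).
Qed.

Lemma effective_faithful_monadic : effective_faithful p -> monadic p.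
Proof.
  destruct Hran_pres as [r [γ [Hran Hpres]]].
  intros [K' [D [pH [HpH [HΨpH Heq]]]]].
  destruct (ran_codensity L Hran) as [m [η Hcod]].
  pose proof (preserves_ran_opcomma_d0 L (ck_oc K') Hpres) as Hpres'.
  exact (proj2 (EMobj_laxdesc_correspondence L Hcod Hpres') D pH HpH HΨpH Heq).
Qed.

Theorem monadic_iff_effective_faithful : monadic p <-> effective_faithful p.
Proof.
  split; [intros Hm; exists K; exact (monadic_effective_faithful_at Hm) |].
  exact effective_faithful_monadic.
Qed.

End MonadicityCriterion.

Section CoDuality.
Context (C : TwoCatData) {e b : ob C} (p : hom C e b).

Definition opcomma_co (O : opcomma p) : opcomma (B := co2 C) p.
Proof.
  refine (@Build_opcomma (co2 C) e b p (oc O) (oc_d1 O) (oc_d0 O) (oc_alpha O) _ _ _).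
  - destruct (oc_alpha_cell O) as [H1 H2]. split; assumption.
  - intros y h0 h1 β [H1 H2].
    destruct (oc_obj O (h0 := h1) (h1 := h0) (β := β)) as [h [[E0 [E1 Eα]] U]];
      [split; assumption |].
    exists h. split; [simpl; auto |]. intros h' [F0 [F1 Fα]]. apply U. auto.
  - intros y h h' ξ0 ξ1 [H1 H2] [H3 H4] E.
    destruct (oc_mor (o := O) (h := h') (h' := h) (ξ0 := ξ1) (ξ1 := ξ0))
      as [ξ [[[F1 F2] [F3 F4]] U]]; [split; assumption | split; assumption | symmetry; exact E |].
    exists ξ. split; [simpl; repeat split; assumption |].
    intros ξ' [[G1 G2] [G3 G4]]. apply U. repeat split; assumption.
Defined.

Definition pushout2_co a c0 c1 (f0 : hom C a c0) (f1 : hom C a c1) (Q : pushout2 f0 f1) :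
  pushout2 (B := co2 C) f1 f0.
Proof.
  refine (@Build_pushout2 (co2 C) a c1 c0 f1 f0 (po Q) (po_q1 Q) (po_q0 Q) _ _ _).
  - symmetry. exact (po_sq Q).
  - intros y k0 k1 E.
    destruct (po_obj Q (k0 := k1) (k1 := k0)) as [k [[E1 E2] U]]; [symmetry; exact E |].
    exists k. split; [simpl; auto |]. intros k' [F1 F2]. apply U. auto.
  - intros y k k' ξ0 ξ1 [H1 H2] [H3 H4] E.
    destruct (po_mor (p := Q) (k := k') (k' := k) (ξ0 := ξ1) (ξ1 := ξ0))
      as [ξ [[[F1 F2] [F3 F4]] U]]; [split; assumption | split; assumption | symmetry; exact E |].
    exists ξ. split; [simpl; repeat split; assumption |].
    intros ξ' [[G1 G2] [G3 G4]]. apply U. repeat split; assumption.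
Defined.

Definition cokernel2_co (K : cokernel2 p) : cokernel2 (B := co2 C) p :=
  @Build_cokernel2 (co2 C) e b p (opcomma_co (ck_oc K)) (pushout2_co (ck_po K)) (ck_D1 K)
    (ck_D1_d0 K) (ck_D1_d1 K) (ck_D1_alpha K) (ck_s0 K) (ck_s0_d1 K) (ck_s0_d0 K)
    (ck_s0_alpha K).

Lemma desc_datum_co (K : cokernel2 p) y (h : hom C y b) β :
  desc_datum (K := cokernel2_co K) h β <-> desc_datum (K := K) h β.
Proof. unfold desc_datum, is_cell, ck_D0, ck_D2, ck_d0, ck_d1. simpl. tauto. Qed.

Definition laxdesc_co (K : cokernel2 p) (D : laxdesc K) : laxdesc (cokernel2_co K).
Proof.
  refine (@Build_laxdesc (co2 C) e b p (cokernel2_co K) (ld_L D) (ld_d D) (ld_Psi D) _ _ _).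
  - apply desc_datum_co. exact (ld_datum D).
  - intros y h β Hd. exact (ld_obj D (proj1 (desc_datum_co h β) Hd)).
  - intros y g g' ξ [H1 H2] E.
    destruct (ld_mor (l := D) (g := g') (g' := g) (ξ := ξ)) as [ζ [[[F1 F2] F3] U]];
      [split; assumption | symmetry; exact E |].
    exists ζ. split; [simpl; repeat split; assumption |].
    intros ζ' [[G1 G2] G3]. apply U. repeat split; assumption.
Defined.

Definition laxdesc_of_co (K : cokernel2 p) (D : laxdesc (cokernel2_co K)) : laxdesc K.
Proof.
  refine (@Build_laxdesc C e b p K (ld_L D) (ld_d D) (ld_Psi D) _ _ _).
  - apply desc_datum_co. exact (ld_datum D).
  - intros y h β Hd. exact (ld_obj D (proj2 (desc_datum_co h β) Hd)).
  - intros y g g' ξ [H1 H2] E.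
    destruct (ld_mor (l := D) (g := g') (g' := g) (ξ := ξ)) as [ζ [[[F1 F2] F3] U]];
      [split; assumption | symmetry; exact E |].
    exists ζ. split; [simpl; repeat split; assumption |].
    intros ζ' [[G1 G2] G3]. apply U. repeat split; assumption.
Defined.

End CoDuality.

Lemma equivalence_of_co2 (C : TwoCatData) a b (f : hom C a b) :
  equivalence (B := co2 C) f -> equivalence f.
Proof.
  intros [g [η [ε [[Hηs Hηt] [[η' [[H1 H2] [H3 H4]]] [[Hεs Hεt] [ε' [[J1 J2] [J3 J4]]]]]]]]].
  simpl in *.
  exists g, η', ε'. split; [split; congruence | split].
  - exists η. split; [split; congruence |]. split; [rewrite H2 | rewrite H1]; assumption.
  - split; [split; congruence |].
    exists ε. split; [split; congruence |]. split; [rewrite J2 | rewrite J1]; assumption.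
Qed.

(* [co2 (co2 C)] is not convertible to [C], but [equivalence] only inspects its components. *)
Lemma equivalence_co2 (C : TwoCatData) a b (f : hom C a b) :
  equivalence (B := co2 C) f <-> equivalence f.
Proof. split; [apply equivalence_of_co2 | exact (@equivalence_of_co2 (co2 C) a b f)]. Qed.

Lemma effective_faithful_at_co2 (C : TwoCatData) e b (p : hom C e b) (K : cokernel2 p) :
  effective_faithful_at (cokernel2_co K) <-> effective_faithful_at K.
Proof.
  split; intros [D [pH [HpH [HΨpH Heq]]]].
  - exists (laxdesc_of_co D), pH. split; [exact HpH | split; [exact HΨpH |]].
    apply equivalence_co2. exact Heq.
  - exists (laxdesc_co D), pH. split; [exact HpH | split; [exact HΨpH |]].
    apply equivalence_co2. exact Heq.
Qed.

Unset Implicit Arguments.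

Theorem corollary5p10 (A : TwoCat) (b e : ob A) (l : hom A b e) (K : kernel2 l) :
  ((exists (r : hom A b b) (γ : cell A b e),
       is_rift l r γ /\ respects_rift (ker_delta0 K) l r γ) ->
     (kleisli l <-> effective_op_faithful l)) /\
  ((exists (r : hom A b b) (γ : cell A b e),
       is_lift l r γ /\ respects_lift (ker_delta1 K) l r γ) ->
     (co_kleisli l <-> effective_op_faithful l)).
Proof.
  pose proof (op2_laws (tc_laws A)) as Lop.
  pose proof (co2_laws Lop) as Lcoop.
  split; intros Hrift.
  - exact (monadic_iff_effective_faithful Lop Hrift).
  - (* [δ_1] of [K] is [δ^0] of the cokernel diagram of [l] in [A^coop]. *)
    change (exists r γ, is_ran (B := coop2 A) l l r γ /\
              preserves_ran (oc_d0 (ck_oc (cokernel2_co K))) l l r γ) in Hrift.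
    split.
    + intros Hm. exists K.
      apply effective_faithful_at_co2, (monadic_effective_faithful_at Lcoop Hrift), Hm.
    + intros [K' HK']. apply (effective_faithful_monadic Lcoop Hrift).
      exists (cokernel2_co K'). apply effective_faithful_at_co2, HK'.
Qed.
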